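(* Let $\Sigma_C\subseteq N_C$ and $\Sigma_R\subseteq N_R$ be finite, let $B\in N_C\setminus\Sigma_C$, and let $\mathcal R$ be the TBox consisting of the axioms $B\sqsubseteq A$ for every $A\in\Sigma_C$ and $B\sqsubseteq\forall r.B$ for every $r\in\Sigma_R$. Let $\mathcal J$ be a model of $\mathcal R$ and $\mathcal I$ an interpretation with $\Delta^{\mathcal I}=\Delta^{\mathcal J}\setminus B^{\mathcal J}$, $A^{\mathcal I}=A^{\mathcal J}\setminus B^{\mathcal J}$ for every $A\in N_C$, and $r^{\mathcal I}=\{(x,y)\in r^{\mathcal J}\mid x\notin B^{\mathcal J},\ y\notin B^{\mathcal J}\}$ for every $r\in N_R$. Then for every $\mathcal{FL}_{\bot\mathit{reg}}$ concept description $K$ containing only concept names from $\Sigma_C$ and role names from $\Sigma_R$ we have $K^{\mathcal I}=(K^B)^{\mathcal J}\setminus B^{\mathcal J}$, where $K^B$ is obtained from $K$ by replacing every occurrence of $\bot$ with $B$.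
   Context: Let $N_C$ and $N_R$ be disjoint countably infinite sets of concept names and role names. Regular role expressions are generated by $E ::= \emptyset \mid \varepsilon \mid r \mid (E+E) \mid (EE) \mid E^{*}$ with $r\in N_R$, with languages $\mathcal L(E)\subseteq N_R^*$. $\mathcal{FL}_{\bot\mathit{reg}}$ concept descriptions: $C ::= A \mid \top \mid \bot \mid (C\sqcap C) \mid \forall E.C$ with $A\in N_C$. An interpretation $\mathcal I$ has a domain $\Delta^{\mathcal I}$, $A^{\mathcal I}\subseteq\Delta^{\mathcal I}$, $r^{\mathcal I}\subseteq(\Delta^{\mathcal I})^2$; $E^{\mathcal I}$ is the union over $r_1\cdots r_n\in\mathcal L(E)$ of $r_1^{\mathcal I}\circ\cdots\circ r_n^{\mathcal I}$ (identity for the empty word); $\top^{\mathcal I}=\Delta^{\mathcal I}$, $\bot^{\mathcal I}=\emptyset$, $\sqcap$ is intersection, $(\forall E.C)^{\mathcal I}=\{x\in\Delta^{\mathcal I}\mid y\in C^{\mathcal I}$ whenever $(x,y)\in E^{\mathcal I}\}$. $\mathcal J$ is a model of a TBox (finite set of axioms $K\sqsubseteq M$) if $K^{\mathcal J}\subseteq M^{\mathcal J}$ for all its axioms. *)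

(* Concept names and role names are both modelled by nat,
   in two separate syntactic positions (hence disjoint, countably infinite). *)
From Stdlib Require Import List.
Import ListNotations.

Definition cname := nat.
Definition rname := nat.

Inductive rexp : Type :=
| RNone : rexp
| REps  : rexp
| RAtom : rname -> rexp
| RPlus : rexp -> rexp -> rexp
| RCat  : rexp -> rexp -> rexp
| RStar : rexp -> rexp.

Inductive lang : rexp -> list rname -> Prop :=
| L_eps : lang REps []
| L_atom : forall r, lang (RAtom r) [r]
| L_plusl : forall E F w, lang E w -> lang (RPlus E F) w
| L_plusr : forall E F w, lang F w -> lang (RPlus E F) w
| L_cat : forall E F u v, lang E u -> lang F v -> lang (RCat E F) (u ++ v)
| L_star0 : forall E, lang (RStar E) []
| L_starS : forall E u v, lang E u -> lang (RStar E) v -> lang (RStar E) (u ++ v).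

Inductive concept : Type :=
| CName : cname -> concept
| CTop : concept
| CBot : concept
| CAnd : concept -> concept -> concept
| CAll : rexp -> concept -> concept.

Record interp : Type := {
  dom : Type;
  cn : cname -> dom -> Prop;
  rn : rname -> dom -> dom -> Prop
}.

Fixpoint word_rel (I : interp) (w : list rname) : dom I -> dom I -> Prop :=
  match w with
  | [] => fun x y => x = y
  | r :: w' => fun x y => exists z, rn I r x z /\ word_rel I w' z y
  end.

Definition rexp_rel (I : interp) (E : rexp) (x y : dom I) : Prop :=
  exists w, lang E w /\ word_rel I w x y.

Fixpoint csem (I : interp) (C : concept) : dom I -> Prop :=
  match C with
  | CName A => cn I A
  | CTop => fun _ => True
  | CBot => fun _ => False
  | CAnd C1 C2 => fun x => csem I C1 x /\ csem I C2 x
  | CAll E C' => fun x => forall y, rexp_rel I E x y -> csem I C' y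
  end.

Definition tbox := list (concept * concept).

Definition is_model (J : interp) (T : tbox) : Prop :=
  forall K M, In (K, M) T -> forall x, csem J K x -> csem J M x.

Fixpoint rexp_in_sig (SR : list rname) (E : rexp) : Prop :=
  match E with
  | RNone | REps => True
  | RAtom r => In r SR
  | RPlus E1 E2 | RCat E1 E2 => rexp_in_sig SR E1 /\ rexp_in_sig SR E2
  | RStar E1 => rexp_in_sig SR E1
  end.

Fixpoint concept_in_sig (SC : list cname) (SR : list rname) (K : concept) : Prop :=
  match K with
  | CName A => In A SC
  | CTop | CBot => True
  | CAnd K1 K2 => concept_in_sig SC SR K1 /\ concept_in_sig SC SR K2
  | CAll E K1 => rexp_in_sig SR E /\ concept_in_sig SC SR K1
  end.

Fixpoint replace_bot (B : cname) (K : concept) : concept :=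
  match K with
  | CName A => CName A
  | CTop => CTop
  | CBot => CName B
  | CAnd K1 K2 => CAnd (replace_bot B K1) (replace_bot B K2)
  | CAll E K1 => CAll E (replace_bot B K1)
  end.

Definition tboxR (SC : list cname) (SR : list rname) (B : cname) : tbox :=
  map (fun A => (CName B, CName A)) SC ++
  map (fun r => (CName B, CAll (RAtom r) (CName B))) SR.

Definition restr_dom (J : interp) (B : cname) : Type :=
  { x : dom J | ~ cn J B x }.

(** Since [R] forces [B] to imply every [A] in [SC] and to be closed under
    every role in [SR], an element of [B^J] satisfies every [K^B] over the
    signature.  Hence, for a [∀E.K] and an element outside [B^J], the
    [E]-successors in [J] are either inside [B^J], where [K^B] holds
    anyway, or reached by a path avoiding [B^J] altogether, i.e. a path of
    [I]; induction on [K] then gives [K^I = (K^B)^J ∖ B^J]. *)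

From Stdlib Require Import List Classical.
Import ListNotations.

Lemma lang_in_sig (SR : list rname) (E : rexp) (w : list rname) :
  lang E w -> rexp_in_sig SR E -> Forall (fun r => In r SR) w.
Proof.
  induction 1; simpl; intros HE; try tauto.
  - constructor.
  - constructor; [assumption | constructor].
  - apply Forall_app; tauto.
  - constructor.
  - apply Forall_app; auto.
Qed.

Definition role_closed (J : interp) (SR : list rname) (P : dom J -> Prop) : Prop :=
  forall r x y, In r SR -> P x -> rn J r x y -> P y.

Section RoleClosed.

Variables (J : interp) (SR : list rname) (P : dom J -> Prop).
Hypothesis HP : role_closed J SR P.

Lemma word_rel_closed (w : list rname) :
  Forall (fun r => In r SR) w -> forall x y, P x -> word_rel J w x y -> P y.
Proof.
  induction 1 as [| r w Hr _ IHw]; simpl; intros x y Hx Hxy.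
  - subst; exact Hx.
  - destruct Hxy as [z [Hxz Hzy]].
    exact (IHw z y (HP r x z Hr Hx Hxz) Hzy).
Qed.

Lemma rexp_rel_closed (E : rexp) (x y : dom J) :
  rexp_in_sig SR E -> P x -> rexp_rel J E x y -> P y.
Proof.
  intros HE Hx [w [Hw Hxy]].
  exact (word_rel_closed w (lang_in_sig SR E w Hw HE) x y Hx Hxy).
Qed.

End RoleClosed.

Section ModelOfR.

Variables (SC : list cname) (SR : list rname) (B : cname) (J : interp).
Hypothesis HJ : is_model J (tboxR SC SR B).

Lemma tboxR_role_closed : role_closed J SR (cn J B).
Proof.
  intros r x y Hr Hx Hxy.
  assert (Hax : In (CName B, CAll (RAtom r) (CName B)) (tboxR SC SR B)).
  { apply in_or_app; right; apply in_map_iff; eauto. }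
  apply (HJ _ _ Hax x Hx).
  exists [r]; split; [constructor | simpl; eauto].
Qed.

Lemma tboxR_subsumes (A : cname) (x : dom J) :
  In A SC -> cn J B x -> cn J A x.
Proof.
  intros HA Hx.
  assert (Hax : In (CName B, CName A) (tboxR SC SR B)).
  { apply in_or_app; left; apply in_map_iff; eauto. }
  exact (HJ _ _ Hax x Hx).
Qed.

Lemma csem_replace_bot_on_B (K : concept) :
  concept_in_sig SC SR K -> forall x, cn J B x -> csem J (replace_bot B K) x.
Proof.
  induction K as [A | | | K1 IH1 K2 IH2 | E K IHK]; simpl; intros HK x Hx.
  - exact (tboxR_subsumes A x HK Hx).
  - exact I.
  - exact Hx.
  - destruct HK; split; auto.
  - destruct HK as [HE HK]; intros y Hxy.
    exact (IHK HK y (rexp_rel_closed J SR _ tboxR_role_closed E x y HE Hx Hxy)).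
Qed.

End ModelOfR.

Section Restriction.

Variables (J : interp) (B : cname).
Variables (cnI : cname -> restr_dom J B -> Prop)
          (rnI : rname -> restr_dom J B -> restr_dom J B -> Prop).
Hypothesis HA : forall A (x : restr_dom J B), cnI A x <-> cn J A (proj1_sig x).
Hypothesis Hr : forall r (x y : restr_dom J B),
  rnI r x y <-> rn J r (proj1_sig x) (proj1_sig y).

Let I : interp := {| dom := restr_dom J B; cn := cnI; rn := rnI |}.

Lemma word_rel_restr_proj (w : list rname) (x y : dom I) :
  word_rel I w x y -> word_rel J w (proj1_sig x) (proj1_sig y).
Proof.
  revert x; induction w as [| r w IHw]; simpl; intros x Hxy.
  - subst; reflexivity.
  - destruct Hxy as [z [Hxz Hzy]].
    exists (proj1_sig z); split; [apply Hr; exact Hxz | exact (IHw z Hzy)].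
Qed.

Lemma word_rel_restr_lift (SR : list rname) (w : list rname) :
  role_closed J SR (cn J B) -> Forall (fun r => In r SR) w ->
  forall (x : dom I) y, word_rel J w (proj1_sig x) y -> ~ cn J B y ->
  exists y' : dom I, proj1_sig y' = y /\ word_rel I w x y'.
Proof.
  intros HBcl; induction 1 as [| r w Hr0 Hw IHw]; simpl; intros x y Hxy Hy.
  - exists x; auto.
  - destruct Hxy as [z [Hxz Hzy]].
    (* [z] lies outside [B^J], since from [B^J] one never leaves [B^J]. *)
    assert (Hz : ~ cn J B z)
      by (intro Hz; exact (Hy (word_rel_closed J SR _ HBcl w Hw z y Hz Hzy))).
    destruct (IHw (exist _ z Hz) y Hzy Hy) as [y' [Hy' Hzy']].
    exists y'; split; [exact Hy' |].
    exists (exist _ z Hz); split; [apply Hr; exact Hxz | exact Hzy'].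
Qed.

Lemma csem_restr (SC : list cname) (SR : list rname) (K : concept) :
  is_model J (tboxR SC SR B) -> concept_in_sig SC SR K ->
  forall x : dom I, csem I K x <-> csem J (replace_bot B K) (proj1_sig x).
Proof.
  intros HJ; induction K as [A | | | K1 IH1 K2 IH2 | E K IHK]; simpl; intros HK x.
  - apply HA.
  - tauto.
  - destruct x as [x Hx]; simpl; tauto.
  - destruct HK as [HK1 HK2]; rewrite (IH1 HK1), (IH2 HK2); tauto.
  - destruct HK as [HE HK]; split.
    + intros Hall y [w [Hw Hxy]].
      destruct (classic (cn J B y)) as [Hy | Hy].
      * exact (csem_replace_bot_on_B SC SR B J HJ K HK y Hy).
      * destruct (word_rel_restr_lift SR w (tboxR_role_closed SC SR B J HJ)
                    (lang_in_sig SR E w Hw HE) x y Hxy Hy) as [y' [<- Hxy']].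
        apply (IHK HK), Hall; exists w; auto.
    + intros Hall y [w [Hw Hxy]].
      apply (IHK HK), Hall; exists w.
      split; [exact Hw | exact (word_rel_restr_proj w x y Hxy)].
Qed.

End Restriction.

Theorem lemma7 (SC : list cname) (SR : list rname) (B : cname)
  (HB : ~ In B SC)
  (J : interp) (HJ : is_model J (tboxR SC SR B))
  (cnI : cname -> restr_dom J B -> Prop)
  (rnI : rname -> restr_dom J B -> restr_dom J B -> Prop)
  (HA : forall A (x : restr_dom J B), cnI A x <-> cn J A (proj1_sig x))
  (Hr : forall r (x y : restr_dom J B),
        rnI r x y <-> rn J r (proj1_sig x) (proj1_sig y))
  (K : concept) (HK : concept_in_sig SC SR K) :
  let I := {| dom := restr_dom J B; cn := cnI; rn := rnI |} in
  forall z : dom J,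
    (exists x : dom I, csem I K x /\ proj1_sig x = z)
    <-> (csem J (replace_bot B K) z /\ ~ cn J B z).
Proof.
  intros I z; pose proof (csem_restr J B cnI rnI HA Hr SC SR K HJ HK) as HKI.
  split.
  - intros [x [Hx <-]]; split; [apply HKI; exact Hx | exact (proj2_sig x)].
  - intros [Hz HBz]; exists (exist _ z HBz); split; [apply HKI; exact Hz | reflexivity].
Qed.
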